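(* Let $G$ be a finite non-abelian group. Then the non-centralizer graph $\Upsilon_G$ is not $n$-regular for any integer $n$ that is a power of a prime (i.e. $n=p^k$ with $p$ prime and $k\geq 1$).
   Context: For a finite group $G$, $C_G(x)$ denotes the centralizer of $x\in G$. The non-centralizer graph $\Upsilon_G$ is the simple graph with vertex set $G$ in which two distinct vertices $x,y$ are adjacent if and only if $C_G(x)\neq C_G(y)$. A graph is $n$-regular if every vertex has degree exactly $n$. *)

From mathcomp Require Import all_boot all_fingroup.
Set Implicit Arguments. Unset Strict Implicit. Unset Printing Implicit Defensive.
Local Open Scope group_scope.

Definition noncent_adj (gT : finGroupType) (G : {group gT}) (x y : gT) : bool :=
  (x != y) && ('C_G[x] != 'C_G[y]).

Definition noncent_deg (gT : finGroupType) (G : {group gT}) (x : gT) : nat :=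
  #|[set y in G | noncent_adj G x y]|.

Definition noncent_regular (gT : finGroupType) (G : {group gT}) (n : nat) : Prop :=
  forall x, x \in G -> noncent_deg G x = n.

From mathcomp Require Import all_boot all_fingroup.
From mathcomp Require Import all_solvable.
Set Implicit Arguments. Unset Strict Implicit. Unset Printing Implicit Defensive.

(* The vertices not adjacent to x are those with the same centralizer as x,
   so in an n-regular graph each such class has the size #|Z(G)| of the
   class of 1.  As the class of x contains the coset Z(G) x, it equals it;
   since it also contains x^-1, every square is central.  Hence G/Z(G) is
   elementary abelian of order 2^(m+2) (order 2 would make it cyclic), so
   n = #|Z(G)| (2^(m+2) - 1), and n = p^k forces p and #|Z(G)| to be odd.
   But every commutator [x, y] is central with [x, y]^2 = [x^2, y] = 1, so
   it is trivial in a centre of odd order, and G would be abelian. *)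

Lemma odd_cofactor_primeX p k a b :
  prime p -> odd b -> 1 < b -> p ^ k = a * b -> odd a.
Proof.
move=> p_pr odd_b b_gt1 def_pk.
have /(dvdn_pfactor _ _ p_pr)[m _ def_b] : b %| p ^ k by rewrite def_pk dvdn_mull.
have odd_p : odd p.
  by move: odd_b b_gt1; rewrite def_b oddX; case: m {def_b}.
apply: (@dvdn_odd _ (p ^ k)); first by rewrite def_pk dvdn_mulr.
by rewrite oddX odd_p orbT.
Qed.

Local Open Scope group_scope.

Lemma odd_order_expg2_eq1 (gT : finGroupType) (H : {group gT}) (c : gT) :
  odd #|H| -> c \in H -> c ^+ 2 = 1 -> c = 1.
Proof.
move=> odd_H Hc c2; apply/eqP; rewrite -order_eq1 -dvdn1.
have <- : gcdn 2 #|H| = 1%N by apply/eqP; rewrite -coprime2n in odd_H.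
by rewrite dvdn_gcd order_dvdn c2 eqxx order_dvdG.
Qed.

Section CentralizerClasses.

Variables (gT : finGroupType) (G : {group gT}).

Definition cent1_class (x : gT) := [set y in G | 'C_G[y] == 'C_G[x]].

Lemma noncent_deg_cent1_class x : noncent_deg G x + #|cent1_class x| = #|G|.
Proof.
rewrite /noncent_deg -(cardsID (cent1_class x) G) addnC; congr (_ + _).
  by apply: eq_card => y; rewrite !inE; case: (y \in G).
apply: eq_card => y; rewrite !inE /noncent_adj.
case: (y \in G) => //=; case: eqP => [->|_]; first by rewrite eqxx.
by rewrite andbT eq_sym.
Qed.

Lemma cent1_class1 : cent1_class 1 = 'Z(G).
Proof.
apply/setP => y; rewrite !inE cent11T setIT.
case Gy: (y \in G) => //=.
apply/eqP/centP => [def_CGy z Gz | cGy].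
  by have /subcent1P[_ /esym] : z \in 'C_G[y] by rewrite def_CGy.
by apply/setP => z; rewrite in_setI andb_idr // => /cGy/esym/cent1P.
Qed.

Lemma subcent1V x : 'C_G[x^-1] = 'C_G[x].
Proof. by rewrite -!cent_cycle cycleV. Qed.

Lemma subcent1_mul_center x z : z \in 'Z(G) -> 'C_G[z * x] = 'C_G[x].
Proof.
case/centerP=> _ cGz; apply/setP => y; rewrite !in_setI.
case Gy: (y \in G) => //=; have cyz : commute y z by apply/esym/cGz.
apply/cent1P/cent1P => [cy_zx | cyx]; last exact: commuteM.
by rewrite -(mulKg z x); apply: commuteM => //; apply: commuteV.
Qed.

Lemma center_rcoset_sub_cent1_class x :
  x \in G -> 'Z(G) :* x \subset cent1_class x.
Proof.
move=> Gx; apply/subsetP => _ /rcosetP[z Zz ->].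
by rewrite in_set groupM ?(subsetP (center_sub G) z Zz) //= subcent1_mul_center.
Qed.

Variable n : nat.
Hypothesis regG : noncent_regular G n.

Lemma noncent_regular_card_cent1_class x : x \in G -> #|cent1_class x| = #|'Z(G)|.
Proof.
move=> Gx; apply/eqP; rewrite -(eqn_add2l n) -{1}(regG Gx) -(regG (group1 G)).
by rewrite -cent1_class1 !noncent_deg_cent1_class.
Qed.

Lemma noncent_regular_cent1_class x : x \in G -> cent1_class x = 'Z(G) :* x.
Proof.
move=> Gx; apply/eqP; rewrite eq_sym eqEcard center_rcoset_sub_cent1_class //.
by rewrite card_rcoset noncent_regular_card_cent1_class /=.
Qed.

Lemma noncent_regular_expg2_center x : x \in G -> x ^+ 2 \in 'Z(G).
Proof.
move=> Gx; have : x^-1 \in cent1_class x by rewrite in_set groupV Gx subcent1V /=.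
rewrite noncent_regular_cent1_class // mem_rcoset -invMg => Zx2.
by rewrite -[x ^+ 2]invgK groupV.
Qed.

Lemma noncent_regular_degree : n = (#|'Z(G)| * #|G : 'Z(G)|.-1)%N.
Proof.
have := noncent_deg_cent1_class 1; rewrite cent1_class1 (regG (group1 G)).
rewrite -(Lagrange (center_sub G)) -subn1 mulnBr muln1 => <-.
by rewrite addnK.
Qed.

End CentralizerClasses.

Section CentralSquares.

Variables (gT : finGroupType) (G : {group gT}).
Hypothesis sqrZ : {in G, forall x, x ^+ 2 \in 'Z(G)}.

Let nZG : G \subset 'N('Z(G)) := normal_norm (center_normal G).

Lemma central_sqr_abelem : 2.-abelem (G / 'Z(G)).
Proof.
apply: exponent2_abelem; apply/exponentP => _ /morphimP[x Nx Gx ->].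
by rewrite -morphX //= coset_id ?sqrZ.
Qed.

Lemma central_sqr_commg_center x y : x \in G -> y \in G -> [~ x, y] \in 'Z(G).
Proof.
move=> Gx Gy; have abGZ := abelem_abelian central_sqr_abelem.
by apply: (subsetP (der1_min nZG abGZ)); apply: mem_commg.
Qed.

Lemma central_sqr_commg_expg2 x y : x \in G -> y \in G -> [~ x, y] ^+ 2 = 1.
Proof.
move=> Gx Gy; have /centerP[_ cGxy] := central_sqr_commg_center Gx Gy.
rewrite -commXg; last exact/esym/cGxy.
by have /centerP[_ cGx2] := sqrZ Gx; apply/eqP/commgP/cGx2.
Qed.

Lemma central_sqr_odd_center_abelian : odd #|'Z(G)| -> abelian G.
Proof.
move=> odd_Z; apply/centsP => x Gx y Gy; apply/commgP/eqP.
exact: odd_order_expg2_eq1 odd_Z (central_sqr_commg_center _ _)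
  (central_sqr_commg_expg2 _ _).
Qed.

Lemma central_sqr_indexg_nonabelian :
  ~~ abelian G -> exists m, #|G : 'Z(G)| = (2 ^ m.+2)%N.
Proof.
move=> not_abG; have ntGZ : G / 'Z(G) != 1.
  apply: contra not_abG => /eqP trGZ.
  by apply: cyclic_center_factor_abelian; rewrite trGZ cyclic1.
have [_ _ [[|m] oGZ]] := pgroup_pdiv (abelem_pgroup central_sqr_abelem) ntGZ.
  case/negP: not_abG; apply: cyclic_center_factor_abelian.
  by apply: prime_cyclic; rewrite oGZ.
by exists m; rewrite -card_quotient.
Qed.

End CentralSquares.

Theorem corollary2p11 (gT : finGroupType) (G : {group gT}) :
  ~~ abelian G ->
  forall p k : nat, prime p -> 0 < k -> ~ noncent_regular G (p ^ k).
Proof.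
move=> not_abG p k p_pr _ regG.
have sqrZ := noncent_regular_expg2_center regG.
have [m oGZ] := central_sqr_indexg_nonabelian sqrZ not_abG.
have := noncent_regular_degree regG; rewrite oGZ => deg_pk.
have odd_i1 : odd (2 ^ m.+2).-1 by rewrite -subn1 oddB ?expn_gt0 ?oddX.
have i1_gt1 : 1 < (2 ^ m.+2).-1.
  by rewrite -ltnS prednK ?expn_gt0 // -{1}(expn1 2) ltn_exp2l.
have odd_Z := odd_cofactor_primeX p_pr odd_i1 i1_gt1 deg_pk.
exact: (negP not_abG) (central_sqr_odd_center_abelian sqrZ odd_Z).
Qed.
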